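(* Let $\mathcal{H}$ be a hypertree, $T$ a host tree of $\mathcal{H}$, and $B$ a basic set of $\mathcal{H}$. Then the number of edges $e$ of $T$ with $I_\mathcal{H}(e)=B$ equals $\alpha_B-1$.
   Context: A hypergraph $\mathcal{H}$ has a finite vertex set $V(\mathcal{H})$ and a finite family of nonempty subsets (edges). A host tree is a tree on $V(\mathcal{H})$ in which every edge induces a connected subgraph; a hypertree is a hypergraph with a host tree. For $V'\subseteq V(\mathcal{H})$, $I_\mathcal{H}(V')$ is the intersection of all edges containing $V'$, or $V(\mathcal{H})$ if none does; for a tree edge $e=xy$, $I_\mathcal{H}(e)=I_\mathcal{H}(\{x,y\})$. For $A\subseteq V(\mathcal{H})$, $\overline{\mathcal{H}_A}$ is the hypergraph on $V(\mathcal{H})$ whose edges are the edges of $\mathcal{H}$ not containing $A$. The 2-section of a hypergraph is the graph on its vertices where two distinct vertices are adjacent iff some edge contains both. For a basic set $B$, $A(B)$ is the set of connected components of the 2-section of $\overline{\mathcal{H}_B}$ containing at least one vertex of $B$, and $\alpha_B=|A(B)|$. A union of sets is connected if the intersection graph of the sets is connected. $Comp(\mathcal{H})$ is the hypergraph without repeated edges on $V(\mathcal{H})$ whose edges are $V(\mathcal{H})$, all singletons, and all proper subsets obtainable from edges of $\mathcal{H}$ by repeated nonempty intersections and connected unions; a basic set is an edge of $Comp(\mathcal{H})$ with more than one vertex that is not a connected union of strictly smaller edges of $Comp(\mathcal{H})$. *)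

From mathcomp Require Import all_boot all_order.
Set Implicit Arguments. Unset Strict Implicit. Unset Printing Implicit Defensive.

Section Hypertrees.
Variable V : finType.
(* A hypergraph on vertex set V is a finite family (a seq, repetitions
   allowed) of nonempty subsets of V. *)
Definition hypergraph (H : seq {set V}) : Prop := forall X, X \in H -> X != set0.

Definition tedges (t : rel V) : {set {set V}} :=
  [set [set x; y] | x in V, y in V & t x y].

Definition is_tree (t : rel V) : Prop :=
  symmetric t /\ irreflexive t /\ (forall x y, connect t x y) /\
  #|tedges t| = #|V|.-1.

Definition induces_connected (t : rel V) (X : {set V}) : Prop :=
  forall x y, x \in X -> y \in X ->
    connect [rel u v | [&& t u v, u \in X & v \in X]] x y.

Definition host_tree (H : seq {set V}) (t : rel V) : Prop :=
  is_tree t /\ forall X, X \in H -> induces_connected t X.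

(* I_H(V') : intersection of all edges containing V' (V if none). *)
Definition I_H (H : seq {set V}) (V' : {set V}) : {set V} :=
  \bigcap_(X <- H | V' \subset X) X.

Definition Hbar (H : seq {set V}) (A : {set V}) : seq {set V} :=
  filter (fun X : {set V} => ~~ (A \subset X)) H.

Definition two_section (H : seq {set V}) : rel V :=
  fun x y : V => (x != y) && has (fun X : {set V} => (x \in X) && (y \in X)) H.

Definition component (r : rel V) (x : V) : {set V} := [set y | connect r x y].

Definition AB (H : seq {set V}) (B : {set V}) : {set {set V}} :=
  [set component (two_section (Hbar H B)) x | x in B].
Definition alpha (H : seq {set V}) (B : {set V}) : nat := #|AB H B|.

Definition conn_family (F : {set {set V}}) : Prop :=
  forall X Y, X \in F -> Y \in F ->
    connect [rel P Q | [&& P \in F, Q \in F & P :&: Q != set0]] X Y.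

Inductive obtainable (H : seq {set V}) : {set V} -> Prop :=
| ob_edge X : X \in H -> obtainable H X
| ob_cap X Y : obtainable H X -> obtainable H Y -> X :&: Y != set0 ->
    obtainable H (X :&: Y)
| ob_cup (F : {set {set V}}) : F != set0 ->
    (forall X, X \in F -> obtainable H X) -> conn_family F ->
    obtainable H (\bigcup_(X in F) X).

Definition comp_edge (H : seq {set V}) (X : {set V}) : Prop :=
  X = [set: V] \/ (exists x, X = [set x]) \/
  (obtainable H X /\ X \proper [set: V]).

Definition basic_set (H : seq {set V}) (B : {set V}) : Prop :=
  comp_edge H B /\ 1 < #|B| /\
  ~ (exists F : {set {set V}},
       [/\ F != set0, (forall X, X \in F -> comp_edge H X /\ X \proper B),
           conn_family F & \bigcup_(X in F) X = B]).
End Hypertrees.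

From mathcomp Require Import all_boot all_order zify.
Set Implicit Arguments. Unset Strict Implicit. Unset Printing Implicit Defensive.

(* Every hyperedge induces a subtree of T, hence so does every set obtained
   from hyperedges by nonempty intersections and connected unions; in
   particular B does, and I_H(ab) is contained in B for every tree edge ab
   inside B.  So the tree edges e with I_H(e) = B are exactly the tree edges
   inside B that lie in no hyperedge not containing B.  The other tree edges
   inside B form a forest on B whose components are the alpha_B classes of
   A(B): a path of the 2-section of the hyperedges not containing B can be
   rerouted along covered tree edges, and in a forest a path between two
   vertices of the subtree B stays inside B.  As a forest with k components on
   n vertices has n - k edges, the count is (|B| - 1) - (|B| - alpha_B). *)

Lemma connect_ind (T : finType) (e : rel T) (P : T -> Prop) a :
  P a -> (forall u v, P u -> e u v -> P v) -> forall b, connect e a b -> P b.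
Proof.
move=> Pa step b /connectP [p + ->]; elim: p a Pa => [|c p IH] a Pa //= /andP [eac].
exact: IH (step _ _ Pa eac).
Qed.

Lemma leq_card_imset_coarser (T U1 U2 : finType) (f : T -> U1) (g : T -> U2)
    (W : {set T}) :
  {in W &, forall a b, g a = g b -> f a = f b} -> #|f @: W| <= #|g @: W|.
Proof.
move=> fg; have [-> | [a0 Wa0]] := set_0Vmem W; first by rewrite !imset0 cards0.
pose k u := f (odflt a0 [pick z in W | g z == u]).
suff -> : f @: W = k @: (g @: W) by exact: leq_imset_card.
rewrite -imset_comp; apply: eq_in_imset => z Wz /=; rewrite /k.
case: pickP => [z' /andP [Wz' /eqP gz] | /(_ z)]; first exact: fg.
by rewrite Wz eqxx.
Qed.

Section Components.
Variable V : finType.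
Implicit Types (r : rel V) (D : {set {set V}}) (e X Y Z : {set V}).

Definition ncomp r Z := #|component r @: Z|.

Lemma eq_component r x y :
  symmetric r -> (component r x == component r y) = connect r x y.
Proof.
move=> sr; apply/eqP/idP => [Exy | cxy].
  have : y \in component r y by rewrite inE connect0.
  by rewrite -Exy inE.
by apply/setP => z; rewrite !inE (same_connect (sym_connect_sym sr) cxy).
Qed.

Lemma leq_ncomp r r' Z : symmetric r -> symmetric r' ->
  {in Z &, forall x y, connect r' x y -> connect r x y} -> ncomp r Z <= ncomp r' Z.
Proof.
move=> sr sr' r'r; apply: leq_card_imset_coarser => x y xZ yZ /eqP.
rewrite eq_component // => /(r'r x y xZ yZ) cxy.
by apply/eqP; rewrite eq_component.
Qed.

Lemma ncomp_gt0 r Z x : x \in Z -> 0 < ncomp r Z.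
Proof. by move=> xZ; rewrite card_gt0; apply/set0Pn; exists (component r x); apply: imset_f. Qed.

Lemma ncomp_le_card r Z : ncomp r Z <= #|Z|.
Proof. exact: leq_imset_card. Qed.

Lemma ncomp_le1 r Z : symmetric r -> {in Z &, forall x y, connect r x y} -> ncomp r Z <= 1.
Proof.
move=> sr cZ; have [-> | [x xZ]] := set_0Vmem Z; first by rewrite /ncomp imset0 cards0.
rewrite /ncomp; suff -> : component r @: Z = [set component r x] by rewrite cards1.
apply/setP => C; rewrite inE; apply/imsetP/eqP => [[y yZ ->] | ->]; last by exists x.
by apply/eqP; rewrite eq_component // cZ.
Qed.

Lemma ncomp_le1_connect r Z : symmetric r -> ncomp r Z <= 1 -> {in Z &, forall x y, connect r x y}.
Proof.
move=> sr Z1 x y xZ yZ; rewrite -eq_component //.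
have [C EC] : exists C, component r @: Z = [set C].
  by apply/cards1P; rewrite eqn_leq Z1 (ncomp_gt0 _ xZ).
have : component r x \in [set C] by rewrite -EC imset_f.
have : component r y \in [set C] by rewrite -EC imset_f.
by rewrite !inE => /eqP -> /eqP ->.
Qed.

Definition pair_rel D : rel V := fun x y => (x != y) && ([set x; y] \in D).

Lemma pair_rel_sym D : symmetric (pair_rel D).
Proof. by move=> x y; rewrite /pair_rel eq_sym setUC. Qed.

Lemma pair_rel_setD1 D e u v :
  pair_rel (D :\ e) u v = pair_rel D u v && ([set u; v] != e).
Proof. by rewrite /pair_rel in_setD1 -andbA [(_ \in D) && _]andbC. Qed.

Lemma connect_pair_relU1 D x y z1 z2 :
  let c := connect (pair_rel D) in
  connect (pair_rel ([set x; y] |: D)) z1 z2 ->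
  c z1 z2 \/ ((c z1 x \/ c z1 y) /\ (c z2 x \/ c z2 y)).
Proof.
move=> c; have csym := sym_connect_sym (pair_rel_sym D).
move: z2; apply: connect_ind; first by left; exact: connect0.
move=> u v Pu /andP [uv]; rewrite in_setU1 => /orP [/eqP Euv | uvD].
  have /set2P ux : u \in [set x; y] by rewrite -Euv set21.
  have /set2P vx : v \in [set x; y] by rewrite -Euv set22.
  right; split; last by case: vx => ->; [left | right]; exact: connect0.
  by case: Pu => [c1 | [] //]; case: ux => <-; [left | right].
have cuv : c u v by apply: connect1; rewrite /pair_rel uv.
have cvu : c v u by rewrite /c csym.
case: Pu => [c1 | [c1 [c2 | c2]]].
- by left; exact: connect_trans c1 cuv.
- by right; split=> //; left; exact: connect_trans cvu c2.
- by right; split=> //; right; exact: connect_trans cvu c2.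
Qed.

Lemma ncomp_setU1 D x y :
  ncomp (pair_rel D) setT <= (ncomp (pair_rel ([set x; y] |: D)) setT).+1.
Proof.
set r := pair_rel D; set r' := pair_rel _.
have sr : symmetric r := pair_rel_sym D.
have csym := sym_connect_sym sr.
(* Off the component of y, the new edge only joins vertices already joined
   through x. *)
pose W := [set z | ~~ connect r y z].
have splitT : component r @: setT \subset component r y |: (component r @: W).
  apply/subsetP => C /imsetP [z _ ->]; rewrite inE.
  have [cyz | ncyz] := boolP (connect r y z); last by rewrite imset_f ?orbT ?inE.
  by rewrite in_set1 eq_component // csym cyz.
have coarserW : #|component r @: W| <= #|component r' @: W|.
  apply: leq_card_imset_coarser => z1 z2; rewrite !inE => n1 n2 /eqP.
  rewrite eq_component; last exact: pair_rel_sym.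
  move=> /connect_pair_relU1 [c12 | [[c1 | c1] [c2 | c2]]]; apply/eqP;
    rewrite eq_component //.
  - by apply: connect_trans c1 _; rewrite csym.
  - by rewrite csym c2 in n2.
  - by rewrite csym c1 in n1.
  - by rewrite csym c1 in n1.
have subT : #|component r' @: W| <= ncomp r' setT by apply/subset_leq_card/imsetS/subsetT.
move: (subset_leq_card splitT) coarserW subT; rewrite cardsU1 /ncomp.
case: (_ \notin _) => /=; lia.
Qed.

Lemma ncomp_subset D D' : {in D', forall e, exists x y, e = [set x; y]} ->
  D \subset D' -> ncomp (pair_rel D) setT <= ncomp (pair_rel D') setT + #|D' :\: D|.
Proof.
move=> pairD'; move nD : #|D' :\: D| => n.
elim: n D nD => [|n IH] D nD sDD'.
  have -> : D = D' by apply/eqP; rewrite eqEsubset sDD' -setD_eq0 -cards_eq0 nD.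
  by rewrite addn0.
have [e eD'D] : exists e, e \in D' :\: D by apply/set0Pn; rewrite -card_gt0 nD.
have /setDP [eD' _] := eD'D.
have [x [y Ee]] := pairD' e eD'.
have sD'e : e |: D \subset D' by rewrite subUset sub1set eD' sDD'.
have ne : #|D' :\: (e |: D)| = n.
  by move: (cardsD1 e (D' :\: D)); rewrite eD'D nD setDDl [D :|: _]setUC => -[].
apply: leq_trans (ncomp_setU1 D x y) _.
by rewrite -Ee addnS ltnS; exact: IH.
Qed.


Lemma ncomp_set0 : ncomp (pair_rel set0) setT = #|V|.
Proof.
rewrite /ncomp -cardsT -(card_imset setT (@set1_inj V)).
suff -> : component (pair_rel set0) @: setT = set1 @: [set: V] by [].
apply: eq_imset => x; apply/setP => z; rewrite !inE.
apply/idP/eqP => [| ->]; last exact: connect0.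
by move: z; apply: connect_ind => // u v _; rewrite /pair_rel inE andbF.
Qed.

Definition edges_in D Z := [set e in D | e \subset Z].

Lemma edges_in_subset D Z : edges_in D Z \subset D.
Proof. by apply/subsetP => e; rewrite inE => /andP []. Qed.

Lemma pair_rel_edges_in D Z u v :
  pair_rel (edges_in D Z) u v = [&& pair_rel D u v, u \in Z & v \in Z].
Proof. by rewrite /pair_rel inE subUset !sub1set !andbA. Qed.

Lemma ncomp_edges_in D Z :
  ncomp (pair_rel (edges_in D Z)) setT = #|~: Z| + ncomp (pair_rel (edges_in D Z)) Z.
Proof.
set r := pair_rel _.
have outside z : z \notin Z -> component r z = [set z].
  move=> zZ; apply/setP => w; rewrite !inE; apply/idP/eqP => [| ->]; last exact: connect0.
  move: w; apply: connect_ind => // u v ->.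
  by rewrite /r pair_rel_edges_in (negbTE zZ) andbF.
have inside x : x \in Z -> component r x \subset Z.
  move=> xZ; apply/subsetP => w; rewrite inE.
  by move: w; apply: connect_ind => // u v _; rewrite /r pair_rel_edges_in => /and3P [].
have EC : component r @: (~: Z) = set1 @: (~: Z).
  by apply: eq_in_imset => z; rewrite inE => /outside.
have disj : component r @: (~: Z) :&: component r @: Z = set0.
  apply/setP => C; rewrite !inE EC.
  apply/negP => /andP [/imsetP [z zZ ->] /imsetP [x xZ Ex]].
  have : z \in Z by apply: (subsetP (inside x xZ)); rewrite -Ex set11.
  by rewrite inE in zZ; apply/negP.
rewrite /ncomp -(setUCr Z) setUC imsetU cardsU disj cards0 subn0 EC card_imset //.
exact: set1_inj.
Qed.

Lemma connect_edges_in_component D x :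
  let C := component (pair_rel D) x in
  {in C &, forall u w, connect (pair_rel (edges_in D C)) u w}.
Proof.
move=> C; set r := pair_rel (edges_in D C).
have xC : forall w, connect (pair_rel D) x w -> w \in C /\ connect r x w.
  apply: connect_ind => [| u v [uC cxu] uv]; first by rewrite inE !connect0.
  have vC : v \in C by move: uC; rewrite !inE => /connect_trans; apply; exact: connect1.
  by split=> //; apply: connect_trans cxu (connect1 _); rewrite /r pair_rel_edges_in uv uC.
move=> u w; rewrite !inE => /xC [_ cxu] /xC [_ cxw].
by apply: connect_trans _ cxw; rewrite (sym_connect_sym (pair_rel_sym _)).
Qed.

Lemma conn_family_connect (R : rel V) (F : {set {set V}}) : conn_family F ->
  (forall Z, Z \in F -> {in Z &, forall u w, connect R u w}) ->
  {in \bigcup_(X in F) X &, forall u w, connect R u w}.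
Proof.
move=> cF cZ u w /bigcupP [X XF uX] /bigcupP [Y YF wY].
suff : Y \in F /\ {in Y, forall w, connect R u w} by case=> _; apply.
have cXY := cF X Y XF YF; clear wY YF; move: Y cXY.
apply: connect_ind => [| Z Z' [ZF cuZ]].
  by split=> // w'; exact: cZ uX.
case/and3P => _ Z'F /set0Pn [v]; rewrite inE => /andP [vZ vZ'].
by split=> // w' w'Z'; exact: connect_trans (cuZ v vZ) (cZ Z' Z'F v w' vZ' w'Z').
Qed.

End Components.

Section Hypergraphs.
Variable V : finType.
Implicit Types (Hs : seq {set V}) (e X : {set V}).

Lemma two_section_sym Hs : symmetric (two_section Hs).
Proof.
move=> x y; rewrite /two_section eq_sym; congr andb.
by apply: eq_has => X; rewrite andbC.
Qed.

Lemma in_I_H Hs e z :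
  (z \in I_H Hs e) = all (fun X => (e \subset X) ==> (z \in X)) Hs.
Proof.
rewrite /I_H; elim: Hs => [|X Hs IH]; first by rewrite big_nil inE.
by rewrite big_cons /=; case: ifP => _; rewrite ?inE IH.
Qed.

Lemma I_H_min Hs e X : X \in Hs -> e \subset X -> I_H Hs e \subset X.
Proof.
by move=> XHs eX; apply/subsetP => z; rewrite in_I_H => /allP /(_ X XHs); rewrite eX.
Qed.

Lemma sub_I_H Hs e : e \subset I_H Hs e.
Proof.
apply/subsetP => z ze; rewrite in_I_H; apply/allP => X _.
by apply/implyP => /subsetP; apply.
Qed.

End Hypergraphs.

Section Tree.
Variables (V : finType) (t : rel V).
Hypothesis t_tree : is_tree t.
Implicit Types (D F : {set {set V}}) (e X Y Z : {set V}) (Hs : seq {set V}).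

Let t_sym : symmetric t. Proof. by case: t_tree. Qed.
Let t_irr : irreflexive t. Proof. by case: t_tree => _ []. Qed.
Let t_connect x y : connect t x y. Proof. by case: t_tree => _ [_ []]. Qed.
Let card_tedges : #|tedges t| = #|V|.-1. Proof. by case: t_tree => _ [_ []]. Qed.

Lemma tedgesP e : reflect (exists x y, t x y /\ e = [set x; y]) (e \in tedges t).
Proof.
apply: (iffP imset2P) => [[x y _ txy ->] | [x [y [txy ->]]]].
  by rewrite inE in txy; exists x, y.
by apply: (Imset2spec (x1 := x) (x2 := y)); rewrite ?inE.
Qed.

Lemma pair_rel_tedges : pair_rel (tedges t) =2 t.
Proof.
move=> u v; apply/andP/idP => [[uv /tedgesP [a [b [tab Eab]]]] | tuv].
  have /set2P ua : u \in [set a; b] by rewrite -Eab set21.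
  have /set2P va : v \in [set a; b] by rewrite -Eab set22.
  by case: ua va uv => -> [] ->; rewrite ?eqxx // t_sym.
split; first by apply: contraTneq tuv => ->; rewrite t_irr.
by apply/tedgesP; exists u, v.
Qed.

Lemma ncomp_tforest D : D \subset tedges t -> ncomp (pair_rel D) setT + #|D| = #|V|.
Proof.
move=> sD.
have pairs : {in tedges t, forall e, exists x y, e = [set x; y]}.
  by move=> e /tedgesP [x [y [_ ->]]]; exists x, y.
have lower := ncomp_subset (fun e eD => pairs e (subsetP sD e eD)) (sub0set D).
have upper := ncomp_subset pairs sD.
have connT : ncomp (pair_rel (tedges t)) setT <= 1.
  apply: ncomp_le1 (pair_rel_sym _) _ => x y _ _.
  by rewrite (eq_connect pair_rel_tedges) t_connect.
(* Squeeze D between the empty graph and the whole tree; each added edge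
   merges at most two components. *)
move: lower upper connT (subset_leq_card sD) (ncomp_le_card (pair_rel D) setT).
by rewrite ncomp_set0 setD0 cardsDS // card_tedges cardsT; lia.
Qed.

Lemma ncomp_tforest_in D Z : D \subset tedges t ->
  ncomp (pair_rel (edges_in D Z)) Z + #|edges_in D Z| = #|Z|.
Proof.
move=> sD; have := ncomp_tforest (subset_trans (edges_in_subset D Z) sD).
by rewrite ncomp_edges_in; have := cardsC Z; lia.
Qed.

Definition tedges_in Z := edges_in (tedges t) Z.

Lemma pair_rel_tedges_in Z :
  pair_rel (tedges_in Z) =2 [rel u v | [&& t u v, u \in Z & v \in Z]].
Proof. by move=> u v; rewrite pair_rel_edges_in pair_rel_tedges. Qed.

Lemma induces_connectedE Z :
  induces_connected t Z <-> ncomp (pair_rel (tedges_in Z)) Z <= 1.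
Proof.
rewrite /induces_connected; split => [Zconn | Z1 x y xZ yZ].
  apply: ncomp_le1 (pair_rel_sym _) _ => x y xZ yZ.
  by rewrite (eq_connect (pair_rel_tedges_in Z)); exact: Zconn.
rewrite -(eq_connect (pair_rel_tedges_in Z)).
exact: ncomp_le1_connect (pair_rel_sym _) Z1 x y xZ yZ.
Qed.

Lemma card_tedges_in Z : #|tedges_in Z| <= #|Z|.-1.
Proof.
have := ncomp_tforest_in Z (subxx (tedges t)).
have [-> | [x xZ]] := set_0Vmem Z; first by rewrite /tedges_in cards0; lia.
by have := ncomp_gt0 (pair_rel (tedges_in Z)) xZ; rewrite /tedges_in; lia.
Qed.

Lemma card_tedges_in_connected Z : induces_connected t Z -> #|tedges_in Z| = #|Z|.-1.
Proof.
move/induces_connectedE; have := ncomp_tforest_in Z (subxx (tedges t)).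
by have := card_tedges_in Z; rewrite /tedges_in; lia.
Qed.

Lemma connected_card_tedges_in Z x :
  x \in Z -> #|Z|.-1 <= #|tedges_in Z| -> induces_connected t Z.
Proof.
move=> xZ EZ; apply/induces_connectedE; move: EZ.
have := ncomp_tforest_in Z (subxx (tedges t)).
by have := ncomp_gt0 (pair_rel (tedges_in Z)) xZ; rewrite /tedges_in; lia.
Qed.

Lemma induces_connectedI X Y : induces_connected t X -> induces_connected t Y ->
  X :&: Y != set0 -> induces_connected t (X :&: Y).
Proof.
move=> Xconn Yconn /set0Pn [x xXY]; apply: (connected_card_tedges_in xXY).
have EI : tedges_in (X :&: Y) = tedges_in X :&: tedges_in Y.
  by apply/setP => e; rewrite !inE subsetI; case: (e \in tedges t).
have EU : tedges_in X :|: tedges_in Y \subset tedges_in (X :|: Y).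
  apply/subsetP => e; rewrite !inE => /orP [] /andP [-> eZ] /=;
    apply: subset_trans eZ _; [exact: subsetUl | exact: subsetUr].
(* |E(X :&: Y)| >= |E X| + |E Y| - |E(X :|: Y)| >= |X :&: Y| - 1 *)
have XY0 : 0 < #|X :&: Y| by rewrite card_gt0; apply/set0Pn; exists x.
move: (subset_leq_card EU) (cardsUI (tedges_in X) (tedges_in Y)) (cardsUI X Y).
move: (card_tedges_in (X :|: Y)) (subset_leq_card (subsetIl X Y)).
move: (subset_leq_card (subsetIr X Y)).
by rewrite -EI (card_tedges_in_connected Xconn) (card_tedges_in_connected Yconn); lia.
Qed.

Lemma tedge_cut a b : t a b -> ~~ connect (pair_rel (tedges t :\ [set a; b])) a b.
Proof.
move=> tab; apply/negP => cab; set D := tedges t :\ [set a; b].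
have abT : [set a; b] \in tedges t by apply/tedgesP; exists a, b.
have csym := sym_connect_sym (pair_rel_sym D).
have aD w : connect (pair_rel D) a w.
  have : connect (pair_rel (tedges t)) a w by rewrite (eq_connect pair_rel_tedges) t_connect.
  rewrite -(setD1K abT) => /connect_pair_relU1 [// | [_ [wa | wb]]].
    by rewrite csym.
  by apply: connect_trans cab _; rewrite csym.
have D1 : ncomp (pair_rel D) setT <= 1.
  apply: ncomp_le1 (pair_rel_sym _) _ => u w _ _.
  by apply: connect_trans (aD w); rewrite csym.
have forest : ncomp (pair_rel D) setT + #|D| = #|V| := ncomp_tforest (subD1set _ _).
have cardD : #|tedges t| = 1 + #|D| by rewrite (cardsD1 [set a; b]) abT.
by move: D1 forest cardD; rewrite card_tedges; lia.
Qed.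

Lemma conn_family_tedge F a b : conn_family F ->
  (forall Z, Z \in F -> induces_connected t Z) -> t a b ->
  a \in \bigcup_(X in F) X -> b \in \bigcup_(X in F) X ->
  exists2 Z, Z \in F & (a \in Z) && (b \in Z).
Proof.
move=> cF Fconn tab aF bF; apply/exists_inP.
apply: (contraNT _ (tedge_cut tab)) => noZ.
apply: (conn_family_connect cF) aF bF => Z ZF u w uZ wZ.
apply: connect_sub (Fconn Z ZF u w uZ wZ) => p q /and3P [tpq pZ qZ].
apply: connect1; rewrite pair_rel_setD1 pair_rel_tedges tpq /=.
apply: contra noZ => /eqP Epq; apply/exists_inP; exists Z => //.
have : [set a; b] \subset Z by rewrite -Epq subUset !sub1set pZ qZ.
by rewrite subUset !sub1set.
Qed.

Lemma induces_connected_bigcup F : conn_family F ->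
  (forall Z, Z \in F -> induces_connected t Z) -> induces_connected t (\bigcup_(X in F) X).
Proof.
move=> cF Fconn x y xF yF; apply: (conn_family_connect cF) xF yF => Z ZF u w uZ wZ.
apply: connect_sub (Fconn Z ZF u w uZ wZ) => p q /and3P [tpq pZ qZ].
by apply: connect1; rewrite /= tpq !(subsetP (bigcup_sup Z ZF)).
Qed.

Lemma component_tforest D x : D \subset tedges t ->
  edges_in D (component (pair_rel D) x) = tedges_in (component (pair_rel D) x).
Proof.
move=> sD; set C := component _ x.
have xC : x \in C by rewrite inE connect0.
have sub : edges_in D C \subset tedges_in C.
  by apply/subsetP => e; rewrite !inE => /andP [/(subsetP sD) -> ->].
have C1 : ncomp (pair_rel (edges_in D C)) C <= 1.
  exact: ncomp_le1 (pair_rel_sym _) (@connect_edges_in_component _ D x).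
(* D has |C| - 1 edges inside its component C, so it has all tree edges
   inside C. *)
have cardC : #|edges_in D C|.+1 = #|C|.
  have k1 : ncomp (pair_rel (edges_in D C)) C = 1.
    by apply/eqP; rewrite eqn_leq C1 (ncomp_gt0 _ xC).
  by rewrite -(ncomp_tforest_in C sD) k1.
apply/eqP; rewrite eqEcard sub /=.
by have := card_tedges_in C; rewrite -cardC.
Qed.

Lemma connect_tforest_in D Z x y : D \subset tedges t -> induces_connected t Z ->
  x \in Z -> y \in Z -> connect (pair_rel D) x y -> connect (pair_rel (edges_in D Z)) x y.
Proof.
move=> sD Zconn xZ yZ cxy; set C := component (pair_rel D) x.
have xCZ : x \in C :&: Z by rewrite !inE connect0.
have yCZ : y \in C :&: Z by rewrite !inE cxy.
have Cconn : induces_connected t C.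
  apply: (induces_connectedE C).2; rewrite -component_tforest //.
  exact: ncomp_le1 (pair_rel_sym _) (@connect_edges_in_component _ D x).
have CZconn : induces_connected t (C :&: Z).
  by apply: induces_connectedI => //; apply/set0Pn; exists x.
apply: connect_sub (CZconn x y xCZ yCZ) => p q /and3P [tpq /setIP [pC pZ] /setIP [qC qZ]].
apply: connect1; rewrite pair_rel_edges_in pZ qZ !andbT.
have : pair_rel (tedges_in C) p q by rewrite pair_rel_tedges_in /= tpq pC qC.
by rewrite -component_tforest // pair_rel_edges_in => /andP [].
Qed.

Variable H : seq {set V}.
Hypothesis H_host : forall X, X \in H -> induces_connected t X.

Definition I_H_closed Y :=
  forall a b, t a b -> a \in Y -> b \in Y -> I_H H [set a; b] \subset Y.

Lemma obtainable_connected Y : obtainable H Y -> induces_connected t Y.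
Proof.
elim=> [X /H_host // | X Y' _ Xconn _ Yconn | F _ _ Fconn cF].
  exact: induces_connectedI.
exact: induces_connected_bigcup.
Qed.

Lemma obtainable_I_H_closed Y : obtainable H Y -> I_H_closed Y.
Proof.
elim=> [X XH | X Y' _ IX _ IY _ | F _ Fob IF cF] a b tab.
- by move=> aX bX; apply: I_H_min XH _; rewrite subUset !sub1set aX bX.
- by move=> /setIP [aX aY] /setIP [bX bY]; rewrite subsetI IX ?IY.
- move=> aF bF; have Fconn Z (ZF : Z \in F) := obtainable_connected (Fob Z ZF).
  have [Z ZF /andP [aZ bZ]] := conn_family_tedge cF Fconn tab aF bF.
  exact: subset_trans (IF Z ZF a b tab aZ bZ) (bigcup_sup Z ZF).
Qed.

Lemma comp_edge_subtree B : comp_edge H B -> 1 < #|B| ->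
  induces_connected t B /\ I_H_closed B.
Proof.
case=> [-> _ | [[x ->] | [Bob _] _]]; last first.
- by split; [exact: obtainable_connected | exact: obtainable_I_H_closed].
- by rewrite cards1.
split=> [x y _ _ | a b *]; last exact: subsetT.
by apply: connect_sub (t_connect x y) => u v tuv; apply: connect1; rewrite /= tuv !inE.
Qed.

Definition covered_tedges Hs :=
  [set e in tedges t | has (fun X => e \subset X) Hs].

Lemma covered_tedges_subset Hs : covered_tedges Hs \subset tedges t.
Proof. by apply/subsetP => e; rewrite inE => /andP []. Qed.

Lemma connect_two_section_covered Hs :
  (forall X, X \in Hs -> induces_connected t X) ->
  forall x y, connect (two_section Hs) x y -> connect (pair_rel (covered_tedges Hs)) x y.
Proof.
move=> Hs_conn; apply: connect_sub => u v /andP [_ /hasP [X XHs /andP [uX vX]]].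
apply: connect_sub (Hs_conn X XHs u v uX vX) => p q /and3P [tpq pX qX].
have /andP [pq pqT] : pair_rel (tedges t) p q by rewrite pair_rel_tedges.
apply: connect1; rewrite /pair_rel pq inE pqT /=.
by apply/hasP; exists X; rewrite // subUset !sub1set pX qX.
Qed.

Lemma connect_covered_two_section Hs Z x y :
  connect (pair_rel (edges_in (covered_tedges Hs) Z)) x y -> connect (two_section Hs) x y.
Proof.
apply: connect_sub => u v; rewrite pair_rel_edges_in => /and3P [/andP [uv]].
rewrite inE => /andP [_ /hasP [X XHs uvX]] _ _; apply: connect1.
by rewrite /two_section uv; apply/hasP; exists X; rewrite // -!sub1set -subUset.
Qed.

Lemma tedges_I_H_eq B : I_H_closed B ->
  [set e in tedges t | I_H H e == B] = tedges_in B :\: edges_in (covered_tedges (Hbar H B)) B.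
Proof.
move=> B_closed; apply/setP => e; rewrite !inE.
case eT: (e \in tedges t) => //=; have /tedgesP [a [b [tab Ee]]] := eT.
apply/eqP/andP => [IeB | [uncov eB]].
  have eB : e \subset B by rewrite -IeB sub_I_H.
  split=> //; rewrite eB andbT; apply/hasP => -[X]; rewrite mem_filter => /andP [BX XH] eX.
  by rewrite -IeB (I_H_min XH eX) in BX.
apply/eqP; rewrite eqEsubset; apply/andP; split.
  by move: eB; rewrite Ee subUset !sub1set => /andP [aB bB]; exact: B_closed.
apply/subsetP => z zB; rewrite in_I_H; apply/allP => X XH; apply/implyP => eX.
have [/subsetP BX | nBX] := boolP (B \subset X); first exact: BX.
by move: uncov; rewrite eB andbT => /hasP []; exists X; rewrite // mem_filter nBX.
Qed.

Lemma ncomp_covered_alpha B : induces_connected t B ->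
  ncomp (pair_rel (edges_in (covered_tedges (Hbar H B)) B)) B = alpha H B.
Proof.
move=> B_conn; have Hbar_conn X : X \in Hbar H B -> induces_connected t X.
  by rewrite mem_filter => /andP [_ /H_host].
apply/eqP; rewrite eqn_leq; apply/andP; split; apply: leq_ncomp;
  try exact: pair_rel_sym; try exact: two_section_sym.
- move=> x y xB yB /(connect_two_section_covered Hbar_conn).
  exact: connect_tforest_in (covered_tedges_subset _) B_conn xB yB.
- by move=> x y _ _; exact: connect_covered_two_section.
Qed.

Lemma card_tedges_I_H_eq B : induces_connected t B -> I_H_closed B ->
  #|[set e in tedges t | I_H H e == B]| = (alpha H B).-1.
Proof.
move=> B_conn B_closed.
have sub : edges_in (covered_tedges (Hbar H B)) B \subset tedges_in B.
  by apply/subsetP => e; rewrite !inE => /andP [/andP [-> _] ->].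
rewrite tedges_I_H_eq // cardsDS // card_tedges_in_connected //.
have := ncomp_tforest_in B (covered_tedges_subset (Hbar H B)).
rewrite ncomp_covered_alpha //.
have : alpha H B <= #|B| := ncomp_le_card _ _.
have : 0 < #|B| -> 0 < alpha H B.
  by rewrite card_gt0 => /set0Pn [x xB]; exact: ncomp_gt0 _ xB.
lia.
Qed.

End Tree.

Theorem mainTheorem14 (V : finType) (H : seq {set V}) (t : rel V)
  (hH : hypergraph H) (ht : host_tree H t) (B : {set V})
  (hB : basic_set H B) :
  #|[set e in tedges t | I_H H e == B]| = (alpha H B).-1.
Proof.
case: ht => t_tree H_host; case: hB => B_comp [B_gt1 _].
have [B_conn B_closed] := comp_edge_subtree t_tree H_host B_comp B_gt1.
exact: card_tedges_I_H_eq.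
Qed.
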